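(* For every integer $n\geq 3$ and every nonzero cardinal number $\beta\leq 2^{\aleph_0}$, there is a partition of $\mathbb{R}^n$ into exactly $\beta$ pairwise disjoint nonempty subsets, each of which is arcwise connected and dense in $\mathbb{R}^n$.
   Context: $\mathbb{R}^n$ carries its usual Euclidean topology. *)

From Stdlib Require Import Reals Lra.
Open Scope R_scope.

(* Points of R^n: real sequences vanishing from index n on (coordinates 0..n-1). *)
Definition Rn (n : nat) : Type :=
  { x : nat -> R | forall i, (n <= i)%nat -> x i = 0 }.

Fixpoint sqsum (n : nat) (x y : nat -> R) : R :=
  match n with
  | O => 0
  | S k => sqsum k x y + (x k - y k) ^ 2
  end.

Definition dist (n : nat) (x y : Rn n) : R :=
  sqrt (sqsum n (proj1_sig x) (proj1_sig y)).

Definition continuous_on01 (n : nat) (f : R -> Rn n) : Prop :=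
  forall t, 0 <= t <= 1 -> forall eps, eps > 0 ->
    exists delta, delta > 0 /\
      forall s, 0 <= s <= 1 -> Rabs (s - t) < delta -> dist n (f s) (f t) < eps.

Definition arcwise_connected (n : nat) (A : Rn n -> Prop) : Prop :=
  forall a b, A a -> A b -> a <> b ->
    exists f : R -> Rn n,
      continuous_on01 n f /\ f 0 = a /\ f 1 = b /\
      (forall t, 0 <= t <= 1 -> A (f t)) /\
      (forall s t, 0 <= s <= 1 -> 0 <= t <= 1 -> f s = f t -> s = t).

Definition dense (n : nat) (A : Rn n -> Prop) : Prop :=
  forall x eps, eps > 0 -> exists y, A y /\ dist n x y < eps.

(* Label the reals by [I] so that every label class is dense: [a] gets label
   [i] when [frac (k! a)] tends to [squash (g i)], a code of [i] in [0, 1/2].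
   Every [y] in [0, 1/2] is such a limit, for [a = sum_k floor (k y) / k!], and
   the limit is unchanged when [a] moves by any [z / N!], so each class is
   dense.  A point of R^n is labelled by [x1] if [x1 = x2] and by [x0]
   otherwise.  A cell is thus a union of the flats [x1 = x2 = c] and of the
   punctured hyperplanes [x0 = c, x1 <> x2] over a dense set of [c]; any two
   of its points are joined inside it by a polygonal path through at most
   three such pieces, and the path is an arc because a lexicographic key built
   from linear forms increases strictly along it. *)

From Pilot Require Import Defs.
From Stdlib Require Import Reals.
Open Scope R_scope.
From Stdlib Require Import Lra Lia ZArith ClassicalEpsilon FunctionalExtensionality ProofIrrelevance.

Lemma frac_part_of_Z_plus (z : Z) (w : R) : 0 <= w < 1 -> frac_part (IZR z + w) = w.
Proof. intros Hw. symmetry. apply (Int_part_frac_part_spec _ z); auto. Qed.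

Lemma frac_part_plus_Z (x : R) (z : Z) : frac_part (x + IZR z) = frac_part x.
Proof.
  rewrite (Rplus_Int_part_frac_part x) at 1.
  replace (IZR (Int_part x) + frac_part x + IZR z)
    with (IZR (Int_part x + z) + frac_part x) by (rewrite plus_IZR; ring).
  apply frac_part_of_Z_plus. destruct (base_fp x). lra.
Qed.

Lemma Un_cv_const (c : R) : Un_cv (fun _ => c) c.
Proof. intros eps Heps. exists O. intros k _. unfold R_dist. rewrite Rminus_diag, Rabs_R0. lra. Qed.

Lemma inv_succ_small (eps : R) : 0 < eps -> exists N, forall k, (N <= k)%nat -> 1 / INR (S k) < eps.
Proof.
  intros Heps. destruct (archimed_cor1 eps Heps) as [N [HN HN0]]. exists N. intros k Hk.
  assert (HNk : INR N <= INR (S k)) by (apply le_INR; lia).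
  assert (0 < INR N) by (apply lt_0_INR; lia).
  apply Rle_lt_trans with (/ INR N); [|exact HN].
  unfold Rdiv. rewrite Rmult_1_l. apply Rinv_le_contravar; lra.
Qed.

Definition fact_frac (s : R) (k : nat) : R := frac_part (INR (fact k) * s).

Section FactorialExpansion.

Variable y : R.
(* [y <= 1/2] is what makes the upper bound of [tail_bounds] inductive. *)
Hypothesis Hy : 0 <= y <= 1 / 2.

Definition digit (k : nat) : Z := Int_part (INR k * y).

Lemma digit_bounds (k : nat) :
  0 <= IZR (digit k) /\ IZR (digit k) <= INR k * y < IZR (digit k) + 1.
Proof.
  unfold digit. destruct (base_Int_part (INR k * y)) as [H1 H2].
  assert (0 <= INR k * y) by (apply Rmult_le_pos; [apply pos_INR | lra]).
  assert (HZ : (-1 < Int_part (INR k * y))%Z) by (apply lt_IZR; simpl; lra).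
  assert (HZ' : (0 <= Int_part (INR k * y))%Z) by lia.
  apply IZR_le in HZ'. lra.
Qed.

Fixpoint numer (k : nat) : Z :=
  match k with
  | O => 0
  | S k' => Z.of_nat (S k') * numer k' + digit (S k')
  end.

Definition partial (k : nat) : R := IZR (numer k) / INR (fact k).

Lemma partial_S (k : nat) :
  partial (S k) - partial k = IZR (digit (S k)) / INR (fact (S k)).
Proof.
  unfold partial. cbn [numer]. change (fact (S k)) with (S k * fact k)%nat.
  rewrite mult_INR, plus_IZR, mult_IZR, <- INR_IZR_INZ.
  assert (H1 := INR_fact_lt_0 k). assert (H2 : 0 < INR (S k)) by (apply lt_0_INR; lia).
  field. lra.
Qed.

Lemma partial_growing : Un_growing partial.
Proof.
  intros k. assert (E := partial_S k). destruct (digit_bounds (S k)) as [D _].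
  assert (0 <= IZR (digit (S k)) / INR (fact (S k))).
  { apply Rle_mult_inv_pos; [exact D | apply INR_fact_lt_0]. }
  lra.
Qed.

Definition tail (k m : nat) : R := INR (fact k) * (partial (m + k) - partial k).

Lemma tail_S (k m : nat) :
  tail k (S m) = (IZR (digit (S k)) + tail (S k) m) / INR (S k).
Proof.
  unfold tail. replace (S m + k)%nat with (m + S k)%nat by lia.
  assert (E := partial_S k). change (fact (S k)) with (S k * fact k)%nat in *.
  rewrite mult_INR in *.
  assert (H1 := INR_fact_lt_0 k). assert (H2 : 0 < INR (S k)) by (apply lt_0_INR; lia).
  replace (partial (m + S k) - partial k)
    with ((partial (m + S k) - partial (S k)) + (partial (S k) - partial k)) by ring.
  rewrite E. field. lra.
Qed.

Lemma tail_bounds (m k : nat) : 0 <= tail k m <= y + 1 / INR (S k).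
Proof.
  revert k. induction m as [|m IH]; intros k.
  - unfold tail. rewrite Nat.add_0_l, Rminus_diag, Rmult_0_r.
    assert (0 < INR (S k)) by (apply lt_0_INR; lia).
    assert (0 < 1 / INR (S k)) by (apply Rdiv_lt_0_compat; lra). lra.
  - rewrite tail_S. destruct (IH (S k)) as [T1 T2].
    destruct (digit_bounds (S k)) as [D0 [D1 D2]].
    assert (HN : 1 <= INR (S k)) by (apply (le_INR 1); lia).
    assert (HN2 : 2 <= INR (S (S k))) by (apply (le_INR 2); lia).
    assert (1 / INR (S (S k)) <= 1 / 2).
    { apply Rmult_le_reg_r with (INR (S (S k))); [lra|]. unfold Rdiv. field_simplify; lra. }
    set (N := INR (S k)) in *. set (t := tail (S k) m) in *.
    split.
    + apply Rle_mult_inv_pos; lra.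
    + apply Rmult_le_reg_r with N; [lra|].
      replace ((IZR (digit (S k)) + t) / N * N) with (IZR (digit (S k)) + t) by (field; lra).
      replace ((y + 1 / N) * N) with (N * y + 1) by (field; lra). lra.
Qed.

Lemma tail_S_lower (m k : nat) : y - 1 / INR (S k) <= tail k (S m).
Proof.
  rewrite tail_S. destruct (tail_bounds m (S k)) as [T1 _].
  destruct (digit_bounds (S k)) as [_ [_ D2]].
  assert (HN : 1 <= INR (S k)) by (apply (le_INR 1); lia).
  set (N := INR (S k)) in *. set (t := tail (S k) m) in *.
  apply Rmult_le_reg_r with N; [lra|].
  replace ((IZR (digit (S k)) + t) / N * N) with (IZR (digit (S k)) + t) by (field; lra).
  replace ((y - 1 / N) * N) with (N * y - 1) by (field; lra). lra.
Qed.

Lemma partial_bounded : has_ub partial.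
Proof.
  exists (y + 1). intros r [k ->].
  destruct (tail_bounds k 0) as [_ H]. unfold tail in H.
  rewrite Nat.add_0_r in H. unfold partial at 2 in H. cbn [numer fact INR IZR] in H.
  replace (1 / 1) with 1 in H by field. unfold Rdiv in H. rewrite Rmult_0_l in H. lra.
Qed.

Section Limit.

Variable s : R.
Hypothesis Hs : Un_cv partial s.

Lemma tail_cv (k : nat) : Un_cv (tail k) (INR (fact k) * (s - partial k)).
Proof.
  apply CV_mult; [apply Un_cv_const |].
  apply CV_minus; [apply CV_shift', Hs | apply Un_cv_const].
Qed.

Lemma remainder_bounds (k : nat) :
  0 <= INR (fact k) * (s - partial k) /\
  y - 1 / INR (S k) <= INR (fact k) * (s - partial k) <= y + 1 / INR (S k).
Proof.
  repeat split.
  - eapply Rle_cv_lim with (Un := fun _ => 0) (Vn := tail k);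
      [intros m; apply (tail_bounds m k) | apply Un_cv_const | apply tail_cv].
  - eapply Rle_cv_lim with (Vn := fun m => tail k (m + 1)).
    + intros m. rewrite Nat.add_1_r. apply tail_S_lower.
    + apply Un_cv_const.
    + apply CV_shift', tail_cv.
  - eapply Rle_cv_lim with (Un := tail k) (Vn := fun _ => y + 1 / INR (S k));
      [intros m; apply (tail_bounds m k) | apply tail_cv | apply Un_cv_const].
Qed.

Lemma fact_frac_cv : Un_cv (fact_frac s) y.
Proof.
  intros eps Heps.
  destruct (inv_succ_small (Rmin eps (1 / 2)) ltac:(apply Rmin_glb_lt; lra)) as [N HN].
  exists N. intros k Hk. specialize (HN k Hk).
  assert (Hm1 := Rmin_l eps (1 / 2)). assert (Hm2 := Rmin_r eps (1 / 2)).
  destruct (remainder_bounds k) as [R0 [R1 R2]].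
  assert (Hsplit : INR (fact k) * s = IZR (numer k) + INR (fact k) * (s - partial k)).
  { unfold partial. assert (H := INR_fact_lt_0 k). field. lra. }
  unfold fact_frac, R_dist. rewrite Hsplit, frac_part_of_Z_plus by lra.
  apply Rabs_def1; lra.
Qed.

End Limit.

End FactorialExpansion.

Lemma fact_frac_limit_exists (y : R) : 0 <= y <= 1 / 2 -> exists s, Un_cv (fact_frac s) y.
Proof.
  intros Hy. destruct (growing_cv _ (partial_growing y Hy) (partial_bounded y Hy)) as [s Hs].
  exists s. exact (fact_frac_cv y Hy s Hs).
Qed.

Lemma fact_divides (N k : nat) : (N <= k)%nat -> exists c, fact k = (c * fact N)%nat.
Proof.
  induction 1 as [|k _ [c Hc]].
  - exists 1%nat. lia.
  - exists (S k * c)%nat. cbn [fact]. rewrite Hc. lia.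
Qed.

Lemma fact_frac_cv_shift (s y : R) (N : nat) (z : Z) :
  Un_cv (fact_frac s) y -> Un_cv (fact_frac (s + IZR z / INR (fact N))) y.
Proof.
  intros Hs eps Heps. destruct (Hs eps Heps) as [M HM].
  exists (M + N)%nat. intros k Hk.
  destruct (fact_divides N k ltac:(lia)) as [c Hc].
  unfold fact_frac.
  replace (INR (fact k) * (s + IZR z / INR (fact N)))
    with (INR (fact k) * s + IZR (z * Z.of_nat c)).
  - rewrite frac_part_plus_Z. apply HM. lia.
  - rewrite mult_IZR, <- INR_IZR_INZ, Hc, mult_INR.
    assert (F := INR_fact_lt_0 N). field. lra.
Qed.

Lemma le_fact (n : nat) : (n <= fact n)%nat.
Proof. induction n as [|n IH]; cbn [fact]; [lia |]. pose proof (lt_O_fact n). nia. Qed.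

Lemma fact_frac_cv_dense (s y : R) : Un_cv (fact_frac s) y ->
  forall x eps, eps > 0 -> exists a, Rabs (a - x) < eps /\ Un_cv (fact_frac a) y.
Proof.
  intros Hs x eps Heps.
  destruct (archimed_cor1 eps Heps) as [N [HN HN0]].
  set (F := INR (fact N)).
  assert (HF : INR N <= F) by apply le_INR, le_fact.
  assert (HN0' : 0 < INR N) by (apply lt_0_INR; lia).
  assert (HFe : / F < eps) by (apply Rle_lt_trans with (/ INR N); [apply Rinv_le_contravar|]; lra).
  set (z := Int_part ((x - s) * F)).
  destruct (base_Int_part ((x - s) * F)) as [Z1 Z2]. fold z in Z1, Z2.
  exists (s + IZR z / F). split; [| apply fact_frac_cv_shift, Hs].
  assert (E : s + IZR z / F - x = (IZR z - (x - s) * F) * / F) by (field; lra).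
  rewrite E, Rabs_mult, Rabs_inv, (Rabs_right F) by lra.
  apply Rle_lt_trans with (1 * / F); [| lra].
  apply Rmult_le_compat_r; [apply Rlt_le, Rinv_0_lt_compat; lra |].
  apply Rabs_le. lra.
Qed.

Definition squash (r : R) : R := 1 / 4 + atan r / (2 * PI).

Lemma squash_range (r : R) : 0 <= squash r <= 1 / 2.
Proof.
  unfold squash. destruct (atan_bound r) as [B1 B2]. assert (HP := PI_RGT_0).
  split.
  - apply Rmult_le_reg_r with (2 * PI); [lra|]. field_simplify; lra.
  - apply Rmult_le_reg_r with (2 * PI); [lra|]. field_simplify; lra.
Qed.

Lemma squash_inj (r r' : R) : squash r = squash r' -> r = r'.
Proof.
  unfold squash. intros E. assert (HP := PI_RGT_0).
  assert (Ea : atan r = atan r').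
  { apply (Rmult_eq_reg_r (/ (2 * PI))); [lra | apply Rinv_neq_0_compat; lra]. }
  rewrite <- (tan_atan r), <- (tan_atan r'), Ea. reflexivity.
Qed.

Definition dense_fibers {I : Type} (h : R -> I) : Prop :=
  forall i x eps, eps > 0 -> exists a, Rabs (a - x) < eps /\ h a = i.

Lemma dense_fibers_exists (I : Type) : inhabited I ->
  (exists g : I -> R, forall i j, g i = g j -> i = j) ->
  exists h : R -> I, dense_fibers h.
Proof.
  intros HI [g Hg].
  set (target a i := Un_cv (fact_frac a) (squash (g i))).
  exists (fun a => epsilon HI (target a)).
  intros i x eps Heps.
  destruct (fact_frac_limit_exists _ (squash_range (g i))) as [s Hs].
  destruct (fact_frac_cv_dense s _ Hs x eps Heps) as [a [Hax Ha]].
  exists a. split; [exact Hax |].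
  apply Hg, squash_inj, (UL_sequence (fact_frac a)); [| exact Ha].
  apply (epsilon_spec HI (target a)). exists i. exact Ha.
Qed.

Definition co {n : nat} (v : Rn n) (i : nat) : R := proj1_sig v i.

Lemma Rn_ext {n : nat} (v w : Rn n) : (forall i, co v i = co w i) -> v = w.
Proof.
  destruct v as [fv pv], w as [fw pw]. unfold co; simpl. intros H.
  assert (fv = fw) by (apply functional_extensionality; exact H). subst.
  f_equal. apply proof_irrelevance.
Qed.

Lemma sqsum_nonneg (k : nat) (x y : nat -> R) : 0 <= sqsum k x y.
Proof. induction k as [|k IH]; simpl; [lra |]. pose proof (pow2_ge_0 (x k - y k)). lra. Qed.

Lemma sqsum_scale (k : nat) (x y x' y' : nat -> R) (c : R) :
  (forall i, x i - y i = c * (x' i - y' i)) -> sqsum k x y = c ^ 2 * sqsum k x' y'.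
Proof. intros H. induction k as [|k IH]; simpl; [ring |]. rewrite IH, H. ring. Qed.

Lemma sqsum_le (k : nat) (x y : nat -> R) (d : R) :
  (forall i, Rabs (x i - y i) <= d) -> sqsum k x y <= INR k * d ^ 2.
Proof.
  intros H. induction k as [|k IH]; simpl; [lra |].
  assert ((x k - y k) ^ 2 <= d ^ 2).
  { rewrite <- (pow2_abs (x k - y k)). pose proof (Rabs_pos (x k - y k)). specialize (H k). nra. }
  destruct k; simpl in *; lra.
Qed.

Lemma sqrt_lt_of_lt_sqr (a eps : R) : 0 <= a -> 0 < eps -> a < eps ^ 2 -> sqrt a < eps.
Proof. intros Ha He H. rewrite <- (sqrt_pow2 eps) by lra. apply sqrt_lt_1_alt. lra. Qed.

Section Paths.

Variable n : nat.

Definition seg (v w : Rn n) (t : R) : Rn n.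
Proof.
  refine (exist _ (fun i => co v i + t * (co w i - co v i)) _).
  intros i Hi. unfold co. rewrite (proj2_sig v i Hi), (proj2_sig w i Hi). ring.
Defined.

Lemma co_seg (v w : Rn n) (t : R) (i : nat) : co (seg v w t) i = co v i + t * (co w i - co v i).
Proof. reflexivity. Qed.

Lemma seg0 (v w : Rn n) : seg v w 0 = v.
Proof. apply Rn_ext. intros i. rewrite co_seg. ring. Qed.

Lemma seg1 (v w : Rn n) : seg v w 1 = w.
Proof. apply Rn_ext. intros i. rewrite co_seg. ring. Qed.

Lemma seg_continuous (v w : Rn n) : continuous_on01 n (seg v w).
Proof.
  intros t Ht eps Heps.
  set (Q := sqsum n (co w) (co v)). assert (HQ : 0 <= Q) by apply sqsum_nonneg.
  set (d := eps / (Q + 1)). assert (Hd : 0 < d) by (apply Rdiv_lt_0_compat; lra).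
  exists d. split; [exact Hd |]. intros s _ Hst. unfold Defs.dist.
  rewrite (sqsum_scale n _ _ (co w) (co v) (s - t)) by (intros i; simpl; ring).
  fold Q. apply sqrt_lt_of_lt_sqr; [apply Rmult_le_pos; [apply pow2_ge_0 | lra] | lra |].
  assert (Hsq : (s - t) ^ 2 <= d ^ 2).
  { rewrite <- (pow2_abs (s - t)). pose proof (Rabs_pos (s - t)). nra. }
  assert (Hdq : d * (Q + 1) = eps) by (unfold d; field; lra).
  nra.
Qed.

Lemma seg_inj (v w : Rn n) (s t : R) : v <> w -> seg v w s = seg v w t -> s = t.
Proof.
  intros Hvw E. destruct (Req_dec s t) as [|Hst]; [assumption |].
  exfalso. apply Hvw, Rn_ext. intros i.
  apply (f_equal (fun p => co p i)) in E. rewrite !co_seg in E.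
  assert (Hm : (s - t) * (co w i - co v i) = 0) by lra.
  apply Rmult_integral in Hm. destruct Hm; lra.
Qed.

Definition cat (f g : R -> Rn n) (t : R) : Rn n :=
  if Rle_dec t (1 / 2) then f (2 * t) else g (2 * t - 1).

Lemma cat0 (f g : R -> Rn n) : cat f g 0 = f 0.
Proof. unfold cat. destruct (Rle_dec 0 (1 / 2)); [| lra]. f_equal. ring. Qed.

Lemma cat1 (f g : R -> Rn n) : cat f g 1 = g 1.
Proof. unfold cat. destruct (Rle_dec 1 (1 / 2)); [lra |]. f_equal. ring. Qed.

Lemma cat_in (A : Rn n -> Prop) (f g : R -> Rn n) :
  (forall t, 0 <= t <= 1 -> A (f t)) -> (forall t, 0 <= t <= 1 -> A (g t)) ->
  forall t, 0 <= t <= 1 -> A (cat f g t).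
Proof. intros Hf Hg t Ht. unfold cat. destruct (Rle_dec t (1 / 2)); [apply Hf | apply Hg]; lra. Qed.

Lemma cat_continuous (f g : R -> Rn n) :
  continuous_on01 n f -> continuous_on01 n g -> f 1 = g 0 -> continuous_on01 n (cat f g).
Proof.
  intros Hf Hg E t Ht eps Heps.
  destruct (Rtotal_order t (1 / 2)) as [Hlt | [-> | Hgt]].
  - destruct (Hf (2 * t) ltac:(lra) eps Heps) as [d [Hd H]].
    exists (Rmin (d / 2) (1 / 2 - t)). split; [apply Rmin_glb_lt; lra |].
    intros s Hs Hst. pose proof (Rmin_l (d / 2) (1 / 2 - t)). pose proof (Rmin_r (d / 2) (1 / 2 - t)).
    apply Rabs_def2 in Hst. unfold cat.
    destruct (Rle_dec s (1 / 2)); [| lra]. destruct (Rle_dec t (1 / 2)); [| lra].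
    apply H; [lra |]. apply Rabs_def1; lra.
  - destruct (Hf 1 ltac:(lra) eps Heps) as [d1 [Hd1 H1]].
    destruct (Hg 0 ltac:(lra) eps Heps) as [d2 [Hd2 H2]].
    exists (Rmin d1 d2 / 2). split; [apply Rdiv_lt_0_compat; [apply Rmin_glb_lt |]; lra |].
    intros s Hs Hst. pose proof (Rmin_l d1 d2). pose proof (Rmin_r d1 d2).
    apply Rabs_def2 in Hst. unfold cat.
    destruct (Rle_dec (1 / 2) (1 / 2)); [| lra]. replace (2 * (1 / 2)) with 1 by field.
    destruct (Rle_dec s (1 / 2)).
    + apply H1; [lra |]. apply Rabs_def1; lra.
    + rewrite E. apply H2; [lra |]. apply Rabs_def1; lra.
  - destruct (Hg (2 * t - 1) ltac:(lra) eps Heps) as [d [Hd H]].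
    exists (Rmin (d / 2) (t - 1 / 2)). split; [apply Rmin_glb_lt; lra |].
    intros s Hs Hst. pose proof (Rmin_l (d / 2) (t - 1 / 2)). pose proof (Rmin_r (d / 2) (t - 1 / 2)).
    apply Rabs_def2 in Hst. unfold cat.
    destruct (Rle_dec s (1 / 2)); [lra |]. destruct (Rle_dec t (1 / 2)); [lra |].
    apply H; [lra |]. apply Rabs_def1; lra.
Qed.

Lemma reverse_continuous (f : R -> Rn n) :
  continuous_on01 n f -> continuous_on01 n (fun t => f (1 - t)).
Proof.
  intros Hf t Ht eps Heps. destruct (Hf (1 - t) ltac:(lra) eps Heps) as [d [Hd H]].
  exists d. split; [exact Hd |]. intros s Hs Hst. apply H; [lra |].
  replace (1 - s - (1 - t)) with (- (s - t)) by ring. rewrite Rabs_Ropp. exact Hst.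
Qed.

Definition is_arc (A : Rn n -> Prop) (a b : Rn n) (f : R -> Rn n) : Prop :=
  continuous_on01 n f /\ f 0 = a /\ f 1 = b /\
  (forall t, 0 <= t <= 1 -> A (f t)) /\
  (forall s t, 0 <= s <= 1 -> 0 <= t <= 1 -> f s = f t -> s = t).

Lemma is_arc_reverse (A : Rn n -> Prop) (a b : Rn n) (f : R -> Rn n) :
  is_arc A a b f -> is_arc A b a (fun t => f (1 - t)).
Proof.
  intros [Hc [H0 [H1 [HA Hi]]]]. repeat split.
  - apply reverse_continuous, Hc.
  - rewrite Rminus_0_r. exact H1.
  - rewrite Rminus_diag. exact H0.
  - intros t Ht. apply HA. lra.
  - intros s t Hs Ht E. specialize (Hi (1 - s) (1 - t) ltac:(lra) ltac:(lra) E). lra.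
Qed.

Lemma is_arc_seg (A : Rn n -> Prop) (a b : Rn n) :
  a <> b -> (forall t, 0 <= t <= 1 -> A (seg a b t)) -> is_arc A a b (seg a b).
Proof.
  intros Hab HA. repeat split.
  - apply seg_continuous.
  - apply seg0.
  - apply seg1.
  - exact HA.
  - intros s t _ _. apply seg_inj, Hab.
Qed.

(* Injectivity of polygonal arcs is certified by a lexicographic key [(psi, phi)]
   that increases strictly along the path. *)
Definition lexlt (psi phi : Rn n -> R) (v w : Rn n) : Prop :=
  psi v < psi w \/ (psi v = psi w /\ phi v < phi w).

Definition lex_increasing (psi phi : Rn n -> R) (f : R -> Rn n) : Prop :=
  forall s t, 0 <= s -> s < t -> t <= 1 -> lexlt psi phi (f s) (f t).

Lemma lex_increasing_inj (psi phi : Rn n -> R) (f : R -> Rn n) : lex_increasing psi phi f ->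
  forall s t, 0 <= s <= 1 -> 0 <= t <= 1 -> f s = f t -> s = t.
Proof.
  intros H s t Hs Ht E. unfold lex_increasing, lexlt in H.
  destruct (Rtotal_order s t) as [h | [h | h]]; [| exact h |].
  - specialize (H s t ltac:(lra) h ltac:(lra)). rewrite E in H. lra.
  - specialize (H t s ltac:(lra) h ltac:(lra)). rewrite E in H. lra.
Qed.

Lemma lex_increasing_cat (psi phi : Rn n -> R) (f g : R -> Rn n) :
  lex_increasing psi phi f -> lex_increasing psi phi g -> f 1 = g 0 ->
  lex_increasing psi phi (cat f g).
Proof.
  unfold lex_increasing, lexlt. intros Hf Hg E s t Hs Hst Ht. unfold cat.
  destruct (Rle_dec s (1 / 2)), (Rle_dec t (1 / 2)); [apply Hf; lra | | lra | apply Hg; lra].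
  destruct (Req_dec (2 * s) 1) as [e | e].
  - rewrite e, E. apply Hg; lra.
  - specialize (Hf (2 * s) 1 ltac:(lra) ltac:(lra) ltac:(lra)).
    specialize (Hg 0 (2 * t - 1) ltac:(lra) ltac:(lra) ltac:(lra)). rewrite E in Hf. lra.
Qed.

Definition affine (L : Rn n -> R) : Prop :=
  forall v w t, L (seg v w t) = L v + t * (L w - L v).

Definition affine_on_levels (psi phi : Rn n -> R) : Prop :=
  forall v w t, psi v = psi w -> phi (seg v w t) = phi v + t * (phi w - phi v).

Lemma lex_increasing_seg (psi phi : Rn n -> R) (v w : Rn n) :
  affine psi -> affine_on_levels psi phi -> lexlt psi phi v w ->
  lex_increasing psi phi (seg v w).
Proof.
  intros Hpsi Hphi Hvw s t Hs Hst Ht. unfold lexlt in *. rewrite !Hpsi.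
  destruct Hvw as [Hlt | [Heq Hlt]]; [left; nra |].
  right. rewrite !(Hphi v w _ Heq), Heq. split; [ring | nra].
Qed.

Definition lex_path (A : Rn n -> Prop) (psi phi : Rn n -> R) (a b : Rn n) (f : R -> Rn n) : Prop :=
  continuous_on01 n f /\ f 0 = a /\ f 1 = b /\
  (forall t, 0 <= t <= 1 -> A (f t)) /\ lex_increasing psi phi f.

Lemma lex_path_is_arc (A : Rn n -> Prop) psi phi (a b : Rn n) (f : R -> Rn n) :
  lex_path A psi phi a b f -> is_arc A a b f.
Proof.
  intros [Hc [H0 [H1 [HA Hl]]]]. repeat split; try assumption.
  apply (lex_increasing_inj psi phi), Hl.
Qed.

Lemma lex_path_cat (A : Rn n -> Prop) psi phi (a m b : Rn n) (f g : R -> Rn n) :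
  lex_path A psi phi a m f -> lex_path A psi phi m b g -> lex_path A psi phi a b (cat f g).
Proof.
  intros [F1 [F2 [F3 [F4 F5]]]] [G1 [G2 [G3 [G4 G5]]]].
  assert (E : f 1 = g 0) by congruence.
  repeat split.
  - apply cat_continuous; assumption.
  - rewrite cat0. exact F2.
  - rewrite cat1. exact G3.
  - apply cat_in; assumption.
  - apply lex_increasing_cat; assumption.
Qed.

Lemma lex_path_seg (A : Rn n -> Prop) psi phi (v w : Rn n) :
  affine psi -> affine_on_levels psi phi ->
  (forall t, 0 <= t <= 1 -> A (seg v w t)) -> lexlt psi phi v w ->
  lex_path A psi phi v w (seg v w).
Proof.
  intros Hpsi Hphi HA Hvw. repeat split.
  - apply seg_continuous.
  - apply seg0.
  - apply seg1.
  - exact HA.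
  - apply lex_increasing_seg; assumption.
Qed.

Definition lin (p q r : R) (v : Rn n) : R := p * co v 0 + q * co v 1 + r * co v 2.

Lemma lin_affine (p q r : R) : affine (lin p q r).
Proof. intros v w t. unfold lin. rewrite !co_seg. ring. Qed.

Lemma affine_on_levels_of_affine (psi phi : Rn n -> R) : affine phi -> affine_on_levels psi phi.
Proof. intros H v w t _. apply H. Qed.

Definition piecewise (psi : Rn n -> R) (c : R) (phi1 phi2 : Rn n -> R) (v : Rn n) : R :=
  if Rle_dec (psi v) c then phi1 v else phi2 v.

Lemma piecewise_affine_on_levels (psi : Rn n -> R) (c : R) (phi1 phi2 : Rn n -> R) :
  affine psi -> affine phi1 -> affine phi2 -> affine_on_levels psi (piecewise psi c phi1 phi2).
Proof.
  intros Hpsi H1 H2 v w t Heq. unfold piecewise.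
  rewrite Hpsi, Heq, Rminus_diag, Rmult_0_r, Rplus_0_r.
  destruct (Rle_dec (psi w) c); [apply H1 | apply H2].
Qed.

End Paths.

Section Cells.

Variable n : nat.
Hypothesis Hn : (3 <= n)%nat.
Variable I : Type.
Variable h : R -> I.
Hypothesis Hh : dense_fibers h.

Definition cell (i : I) (v : Rn n) : Prop :=
  (co v 1 = co v 2 /\ h (co v 1) = i) \/ (co v 1 <> co v 2 /\ h (co v 0) = i).

Definition set012 (v : Rn n) (x0 x1 x2 : R) : Rn n.
Proof.
  refine (exist _ (fun k => match k with 0 => x0 | 1 => x1 | 2 => x2 | _ => co v k end)%nat _).
  intros k Hk. destruct k as [|[|[|k]]]; try lia. apply (proj2_sig v), Hk.
Defined.

Lemma co_set012_0 (v : Rn n) x0 x1 x2 : co (set012 v x0 x1 x2) 0 = x0. Proof. reflexivity. Qed.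
Lemma co_set012_1 (v : Rn n) x0 x1 x2 : co (set012 v x0 x1 x2) 1 = x1. Proof. reflexivity. Qed.
Lemma co_set012_2 (v : Rn n) x0 x1 x2 : co (set012 v x0 x1 x2) 2 = x2. Proof. reflexivity. Qed.

Lemma seg_in_cell_flat (i : I) (v w : Rn n) :
  cell i v -> co v 1 = co v 2 -> co w 1 = co v 1 -> co w 2 = co v 1 ->
  forall t, 0 <= t <= 1 -> cell i (seg n v w t).
Proof.
  intros Hv Ev Ew1 Ew2 t _. left. rewrite !co_seg, Ew1, Ew2, <- Ev.
  split; [ring |]. replace (co v 1 + t * (co v 1 - co v 1)) with (co v 1) by ring.
  destruct Hv as [[_ H] | [H _]]; [exact H | contradiction].
Qed.

Lemma seg_in_cell_hyperplane (i : I) (v w : Rn n) :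
  cell i v -> cell i w -> co v 0 = co w 0 ->
  0 <= (co v 1 - co v 2) * (co w 1 - co w 2) -> ~ (co v 1 = co v 2 /\ co w 1 = co w 2) ->
  forall t, 0 <= t <= 1 -> cell i (seg n v w t).
Proof.
  intros Hv Hw E0 Hsign Hoff t Ht.
  destruct (Req_dec t 0) as [-> | Ht0]; [rewrite seg0; exact Hv |].
  destruct (Req_dec t 1) as [-> | Ht1]; [rewrite seg1; exact Hw |].
  assert (Hlab : h (co v 0) = i).
  { destruct Hv as [[Ev _] | [_ Hv]]; [| exact Hv].
    destruct Hw as [[Ew _] | [_ Hw]]; [tauto | rewrite E0; exact Hw]. }
  right. rewrite !co_seg, <- E0, Rminus_diag, Rmult_0_r, Rplus_0_r. split; [| exact Hlab].
  (* [(1 - t) a + t b = 0] with [a b >= 0] and [0 < t < 1] forces [a = b = 0]. *)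
  intros E. apply Hoff. set (a := co v 1 - co v 2) in *. set (b := co w 1 - co w 2) in *.
  assert (Ecomb : (1 - t) * a + t * b = 0) by (unfold a, b; lra).
  assert (Htt : 0 < t < 1).
  { destruct Ht as [[Ht' | Ht'] [Ht'' | Ht'']]; subst; [lra | congruence ..]. }
  assert (Ha2 : (1 - t) * (a * a) + t * (a * b) = 0)
    by (replace ((1 - t) * (a * a) + t * (a * b)) with (a * ((1 - t) * a + t * b)) by ring;
        rewrite Ecomb; ring).
  assert (Ha : a = 0).
  { apply Rsqr_0_uniq. unfold Rsqr.
    pose proof (Rle_0_sqr a). unfold Rsqr in *. nra. }
  assert (Hb : b = 0) by (rewrite Ha in Ecomb; nra).
  unfold a, b in *. split; lra.
Qed.

Lemma arc_diag_diag (i : I) (a b : Rn n) :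
  cell i a -> cell i b -> co a 1 = co a 2 -> co b 1 = co b 2 -> a <> b ->
  exists f, is_arc n (cell i) a b f.
Proof.
  intros Ha Hb Ea Eb Hab.
  destruct (Req_dec (co a 1) (co b 1)) as [E | E].
  { exists (seg n a b). apply is_arc_seg; [exact Hab |].
    apply seg_in_cell_flat; [exact Ha | exact Ea | lra | lra]. }
  assert (Hai : h (co a 1) = i) by (destruct Ha as [[_ H] | [H _]]; tauto).
  assert (Hbi : h (co b 1) = i) by (destruct Hb as [[_ H] | [H _]]; tauto).
  (* Leave the flat through [a] at a far abscissa [x] with [h x = i], cross the
     hyperplane [x0 = x] to the flat through [b], and come back. *)
  destruct (Hh i (Rmax (co a 0) (co b 0) + 1) (1 / 2) ltac:(lra)) as [x [Hx Hxi]].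
  apply Rabs_def2 in Hx. pose proof (Rmax_l (co a 0) (co b 0)). pose proof (Rmax_r (co a 0) (co b 0)).
  set (mu := (co a 1 + co b 1) / 2). set (D := co b 1 - co a 1).
  assert (HD : 0 < D * D) by (apply Rsqr_pos_lt; unfold D; lra).
  set (m1 := set012 a x (co a 1) (co a 1)).
  set (m2 := set012 a x (mu + 1) (mu - 1)).
  set (m3 := set012 b x (co b 1) (co b 1)).
  assert (Hm1 : cell i m1) by (left; unfold m1; rewrite co_set012_1, co_set012_2; auto).
  assert (Hm2 : cell i m2) by (right; unfold m2; rewrite co_set012_0, co_set012_1, co_set012_2; split; [lra | auto]).
  assert (Hm3 : cell i m3) by (left; unfold m3; rewrite co_set012_1, co_set012_2; auto).
  set (psi := lin n 0 D D).
  set (phi := piecewise n psi (D * (co a 1 + co b 1)) (lin n 1 0 0) (lin n (-1) 0 0)).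
  assert (Kpsi : affine n psi) by apply lin_affine.
  assert (Kphi : affine_on_levels n psi phi) by (apply piecewise_affine_on_levels; apply lin_affine).
  exists (cat n (seg n a m1) (cat n (seg n m1 m2) (cat n (seg n m2 m3) (seg n m3 b)))).
  apply (lex_path_is_arc n _ psi phi).
  apply lex_path_cat with m1; [| apply lex_path_cat with m2; [| apply lex_path_cat with m3]];
    apply lex_path_seg; try assumption;
    unfold lexlt, phi, piecewise, psi, lin, m1, m2, m3, mu;
    rewrite ?co_set012_0, ?co_set012_1, ?co_set012_2.
  - apply seg_in_cell_flat; rewrite ?co_set012_1, ?co_set012_2; auto.
  - right. split; [nra |]. repeat destruct (Rle_dec _ _); unfold D in *; nra.
  - apply seg_in_cell_hyperplane; rewrite ?co_set012_0, ?co_set012_1, ?co_set012_2; auto; [nra | lra].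
  - left. unfold D in *. nra.
  - apply seg_in_cell_hyperplane; rewrite ?co_set012_0, ?co_set012_1, ?co_set012_2; auto; [nra | lra].
  - left. unfold D in *. nra.
  - apply seg_in_cell_flat; rewrite ?co_set012_1, ?co_set012_2; auto.
  - right. split; [nra |]. repeat destruct (Rle_dec _ _); unfold D in *; nra.
Qed.

Lemma arc_diag_offdiag (i : I) (a b : Rn n) :
  cell i a -> cell i b -> co a 1 = co a 2 -> co b 1 <> co b 2 -> a <> b ->
  exists f, is_arc n (cell i) a b f.
Proof.
  intros Ha Hb Ea Eb Hab.
  destruct (Req_dec (co a 0) (co b 0)) as [E | E].
  { exists (seg n a b). apply is_arc_seg; [exact Hab |].
    apply seg_in_cell_hyperplane; [exact Ha | exact Hb | exact E | nra | tauto]. }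
  set (D := co b 0 - co a 0). set (e := co b 1 - co b 2).
  assert (HD : 0 < D * D) by (apply Rsqr_pos_lt; unfold D; lra).
  assert (He : 0 < e * e) by (apply Rsqr_pos_lt; unfold e; lra).
  set (m := set012 b (co b 0) (co a 1) (co a 1)).
  assert (Hm : cell i m).
  { left. unfold m. rewrite co_set012_1, co_set012_2. split; [reflexivity |].
    destruct Ha as [[_ H] | [H _]]; tauto. }
  set (psi := lin n D 0 0). set (phi := lin n 0 e (- e)).
  assert (Kpsi : affine n psi) by apply lin_affine.
  assert (Kphi : affine_on_levels n psi phi) by (apply affine_on_levels_of_affine, lin_affine).
  exists (cat n (seg n a m) (seg n m b)).
  apply (lex_path_is_arc n _ psi phi).
  apply lex_path_cat with m; apply lex_path_seg; try assumption;
    unfold lexlt, phi, psi, lin, m; rewrite ?co_set012_0, ?co_set012_1, ?co_set012_2.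
  - apply seg_in_cell_flat; rewrite ?co_set012_1, ?co_set012_2; auto.
  - left. unfold D in *. nra.
  - apply seg_in_cell_hyperplane; rewrite ?co_set012_0, ?co_set012_1, ?co_set012_2; auto; [nra | tauto].
  - right. split; [ring |]. unfold e in *. nra.
Qed.

Lemma arc_offdiag_same_abscissa (i : I) (a b : Rn n) :
  cell i a -> cell i b -> co a 1 <> co a 2 -> co b 1 <> co b 2 -> co a 0 = co b 0 -> a <> b ->
  exists f, is_arc n (cell i) a b f.
Proof.
  intros Ha Hb Ea Eb E Hab.
  set (ea := co a 1 - co a 2). set (eb := co b 1 - co b 2).
  assert (Hea : 0 < ea * ea) by (apply Rsqr_pos_lt; unfold ea; lra).
  assert (Heb : 0 < eb * eb) by (apply Rsqr_pos_lt; unfold eb; lra).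
  destruct (Rlt_dec 0 (ea * eb)) as [Hsign | Hsign].
  { exists (seg n a b). apply is_arc_seg; [exact Hab |].
    apply seg_in_cell_hyperplane; [exact Ha | exact Hb | exact E | fold ea eb; lra | tauto]. }
  (* Opposite sides of the diagonal: go through the diagonal point above [x0 = a0]. *)
  set (m := set012 a (co a 0) (co a 0) (co a 0)).
  assert (Hm : cell i m).
  { left. unfold m. rewrite co_set012_1, co_set012_2. split; [reflexivity |].
    destruct Ha as [[H _] | [_ H]]; tauto. }
  set (psi := lin n 0 eb (- eb)).
  assert (Kpsi : affine n psi) by apply lin_affine.
  exists (cat n (seg n a m) (seg n m b)).
  apply (lex_path_is_arc n _ psi psi).
  apply lex_path_cat with m;
    apply lex_path_seg; try solve [assumption | apply affine_on_levels_of_affine, Kpsi];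
    unfold lexlt, psi, lin, m; rewrite ?co_set012_0, ?co_set012_1, ?co_set012_2.
  - apply seg_in_cell_hyperplane; rewrite ?co_set012_0, ?co_set012_1, ?co_set012_2; auto; [nra | tauto].
  - left. assert (ea * eb < 0) by (apply Rnot_le_lt; intro; nra). unfold ea, eb in *. nra.
  - apply seg_in_cell_hyperplane; rewrite ?co_set012_0, ?co_set012_1, ?co_set012_2; auto; [nra | tauto].
  - left. unfold eb in *. nra.
Qed.

Lemma arc_offdiag_distinct_abscissa (i : I) (a b : Rn n) :
  cell i a -> cell i b -> co a 1 <> co a 2 -> co b 1 <> co b 2 -> co a 0 <> co b 0 ->
  exists f, is_arc n (cell i) a b f.
Proof.
  intros Ha Hb Ea Eb E.
  assert (Hai : h (co a 0) = i) by (destruct Ha as [[H _] | [_ H]]; tauto).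
  set (ea := co a 1 - co a 2). set (eb := co b 1 - co b 2). set (D := co b 0 - co a 0).
  assert (Hea : 0 < ea * ea) by (apply Rsqr_pos_lt; unfold ea; lra).
  assert (Heb : 0 < eb * eb) by (apply Rsqr_pos_lt; unfold eb; lra).
  assert (HD : 0 < D * D) by (apply Rsqr_pos_lt; unfold D; lra).
  set (m1 := set012 a (co a 0) (co a 0) (co a 0)).
  set (m2 := set012 b (co b 0) (co a 0) (co a 0)).
  assert (Hm1 : cell i m1) by (left; unfold m1; rewrite co_set012_1, co_set012_2; auto).
  assert (Hm2 : cell i m2) by (left; unfold m2; rewrite co_set012_1, co_set012_2; auto).
  set (psi := lin n D 0 0).
  set (phi := piecewise n psi (D * (co a 0 + co b 0) / 2) (lin n 0 (- ea) ea) (lin n 0 eb (- eb))).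
  assert (Kpsi : affine n psi) by apply lin_affine.
  assert (Kphi : affine_on_levels n psi phi) by (apply piecewise_affine_on_levels; apply lin_affine).
  exists (cat n (seg n a m1) (cat n (seg n m1 m2) (seg n m2 b))).
  apply (lex_path_is_arc n _ psi phi).
  apply lex_path_cat with m1; [| apply lex_path_cat with m2];
    apply lex_path_seg; try assumption;
    unfold lexlt, phi, piecewise, psi, lin, m1, m2; rewrite ?co_set012_0, ?co_set012_1, ?co_set012_2.
  - apply seg_in_cell_hyperplane; rewrite ?co_set012_0, ?co_set012_1, ?co_set012_2; auto; [nra | tauto].
  - right. split; [ring |]. repeat destruct (Rle_dec _ _); unfold D, ea in *; nra.
  - apply seg_in_cell_flat; rewrite ?co_set012_1, ?co_set012_2; auto.
  - left. unfold D in *. nra.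
  - apply seg_in_cell_hyperplane; rewrite ?co_set012_0, ?co_set012_1, ?co_set012_2; auto; [nra | tauto].
  - right. split; [ring |]. repeat destruct (Rle_dec _ _); unfold D, eb in *; nra.
Qed.

Lemma cell_arcwise_connected (i : I) : arcwise_connected n (cell i).
Proof.
  intros a b Ha Hb Hab.
  destruct (Req_dec (co a 1) (co a 2)) as [Ea | Ea], (Req_dec (co b 1) (co b 2)) as [Eb | Eb].
  - exact (arc_diag_diag i a b Ha Hb Ea Eb Hab).
  - exact (arc_diag_offdiag i a b Ha Hb Ea Eb Hab).
  - destruct (arc_diag_offdiag i b a Hb Ha Eb Ea (not_eq_sym Hab)) as [f Hf].
    exists (fun t => f (1 - t)). apply is_arc_reverse, Hf.
  - destruct (Req_dec (co a 0) (co b 0)) as [E | E].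
    + exact (arc_offdiag_same_abscissa i a b Ha Hb Ea Eb E Hab).
    + exact (arc_offdiag_distinct_abscissa i a b Ha Hb Ea Eb E).
Qed.

Lemma cell_dense (i : I) : dense n (cell i).
Proof.
  intros x eps Heps. pose proof (pos_INR n).
  set (d := eps / (INR n + 1)). assert (Hd : 0 < d) by (apply Rdiv_lt_0_compat; lra).
  destruct (Hh i (co x 0) d Hd) as [x0 [Hx0 Hx0i]].
  set (x2 := if Req_EM_T (co x 2) (co x 1) then co x 2 + d / 2 else co x 2).
  assert (Hx2 : x2 <> co x 1 /\ Rabs (co x 2 - x2) <= d).
  { unfold x2. destruct (Req_EM_T (co x 2) (co x 1)).
    - replace (co x 2 - (co x 2 + d / 2)) with (- (d / 2)) by ring.
      rewrite Rabs_Ropp, Rabs_right; lra.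
    - rewrite Rminus_diag, Rabs_R0. lra. }
  exists (set012 x x0 (co x 1) x2). split.
  { right. rewrite co_set012_0, co_set012_1, co_set012_2. split; [lra | exact Hx0i]. }
  unfold Defs.dist. apply sqrt_lt_of_lt_sqr; [apply sqsum_nonneg | lra |].
  apply Rle_lt_trans with (INR n * d ^ 2).
  - apply sqsum_le. intros [|[|[|k]]].
    + change (Rabs (co x 0 - x0) <= d). rewrite Rabs_minus_sym. lra.
    + change (Rabs (co x 1 - co x 1) <= d). rewrite Rminus_diag, Rabs_R0. lra.
    + change (Rabs (co x 2 - x2) <= d). lra.
    + change (Rabs (co x (S (S (S k))) - co x (S (S (S k)))) <= d). rewrite Rminus_diag, Rabs_R0. lra.
  - assert (E : d * (INR n + 1) = eps) by (unfold d; field; lra).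
    rewrite <- E. simpl. nra.
Qed.

End Cells.

Theorem corollary2 :
  forall (n : nat), (3 <= n)%nat ->
  forall (I : Type), inhabited I ->
  (exists g : I -> R, forall i j, g i = g j -> i = j) ->
  exists P : I -> (Rn n -> Prop),
    (forall i, exists x, P i x) /\
    (forall i j x, i <> j -> P i x -> P j x -> False) /\
    (forall x, exists i, P i x) /\
    (forall i, arcwise_connected n (P i)) /\
    (forall i, dense n (P i)).
Proof.
  intros n Hn I HI Hg.
  destruct (dense_fibers_exists I HI Hg) as [h Hh].
  exists (cell n I h). repeat split.
  - intros i.
    set (origin := exist (fun x : nat -> R => forall k, (n <= k)%nat -> x k = 0)
                      (fun _ => 0) (fun _ _ => eq_refl) : Rn n).
    destruct (cell_dense n Hn I h Hh i origin 1 ltac:(lra)) as [x [Hx _]].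
    exists x. exact Hx.
  - intros i j x Hij Hi Hj. apply Hij.
    destruct Hi as [[? ?] | [? ?]], Hj as [[? ?] | [? ?]]; congruence.
  - intros x. destruct (Req_dec (co x 1) (co x 2)) as [E | E].
    + exists (h (co x 1)). left. auto.
    + exists (h (co x 0)). right. auto.
  - apply cell_arcwise_connected; assumption.
  - apply cell_dense; assumption.
Qed.
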